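(* Let $D, n \ge 1$, let $t_1, \dots, t_D$ be equally spaced real numbers, and let $\theta = (\theta_1, \theta_2, \theta_3) \in \mathbb{R}^3$ with $l = e^{\theta_1}$, $a^2 = e^{2\theta_2}$, $\sigma^2 = e^{2\theta_3}$. Let $A$ be the $D \times D$ matrix $A_{rs} = a^2 \exp\left(-(t_r - t_s)^2 / l\right)$, let $S$ be the $D\times D$ matrix $S_{rs} = (t_r - t_s)^2 / l$, let $J_n$ be the $n\times n$ all-ones matrix, and let $\hat{C} = \sigma^2 I_{nD} + J_n \otimes A$. Let $Z = (I_D + \sigma^{-2} n A)^{-1}$. For a data vector $X(\tau) \in \mathbb{R}^{nD}$ define $$\log p(X \mid \tau, \theta) = -\tfrac{1}{2} X(\tau)^T \hat{C}^{-1} X(\tau) - \tfrac{1}{2}\log\det \hat{C} - \tfrac{nD}{2}\log 2\pi .$$ Then $$\frac{\partial}{\partial\theta_1}\log p(X \mid \tau, \theta) = \frac{1}{2} X(\tau)^T \left(\sigma^{-4} J_n \otimes \big(Z (A\odot S) Z\big)\right) X(\tau) - \frac{1}{2}\operatorname{tr}\!\left(\hat{C}^{-1} \frac{\partial \hat{C}}{\partial \theta_1}\right),$$ where $$\operatorname{tr}\!\left(\hat{C}^{-1} \frac{\partial \hat{C}}{\partial \theta_1}\right) = \sigma^{-2} n \sum_i (A\odot S)_{ii} - \sigma^{-2} n \sum_{i,j} \left\{(I_D - Z) \odot (A\odot S)\right\}_{ij}.$$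
   Context: $\otimes$ is the Kronecker product and $\odot$ the Hadamard (entrywise) product. $X(\tau)$ is the concatenation $(x_1(t_1),\dots,x_1(t_D),\dots,x_n(t_1),\dots,x_n(t_D))$ of $n$ observation vectors of length $D$. The derivative is taken with $X(\tau)$ and $t_1,\dots,t_D$ fixed, with $A$, $\hat C$, $Z$ depending on $\theta$ through $l, a^2, \sigma^2$ as defined. *)

From HB Require Import structures.
From mathcomp Require Import all_boot all_order all_algebra.
From mathcomp Require Import all_classical all_reals all_analysis.
From mathcomp Require Import mxtens.
Unset Printing Implicit Defensive.
Import Order.TTheory GRing.Theory Num.Theory.
Local Open Scope ring_scope.

Section GPDefs.
Context {R : realType}.

Definition hadamard {m p : nat} (A B : 'M[R]_(m, p)) : 'M[R]_(m, p) :=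
  \matrix_(i, j) (A i j * B i j).

(* Kronecker product: tensmx from mathcomp-real-closed (mxtens), with the
   row index (i, r) of A *t B being i * D + r, matching the ordering of X(tau). *)
Definition kron {m p q s : nat} (A : 'M[R]_(m, p)) (B : 'M[R]_(q, s)) :=
  tensmx A B.

Definition len (th1 : R) : R := expR th1.
Definition asq (th2 : R) : R := expR (2 * th2).
Definition ssq (th3 : R) : R := expR (2 * th3).

Definition Amx {D : nat} (t : 'I_D -> R) (th1 th2 : R) : 'M[R]_D :=
  \matrix_(r, s) (asq th2 * expR (- ((t r - t s) ^+ 2 / len th1))).

Definition Smx {D : nat} (t : 'I_D -> R) (th1 : R) : 'M[R]_D :=
  \matrix_(r, s) ((t r - t s) ^+ 2 / len th1).

Definition Jmx (n : nat) : 'M[R]_n := const_mx 1.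

Definition Chat (n : nat) {D : nat} (t : 'I_D -> R) (th1 th2 th3 : R)
  : 'M[R]_(n * D) :=
  ssq th3 *: 1%:M + kron (Jmx n) (Amx t th1 th2).

Definition Zmx (n : nat) {D : nat} (t : 'I_D -> R) (th1 th2 th3 : R) : 'M[R]_D :=
  invmx (1%:M + ((ssq th3)^-1 * n%:R) *: Amx t th1 th2).

Definition logp (n : nat) {D : nat} (t : 'I_D -> R) (th1 th2 th3 : R)
  (X : 'cV[R]_(n * D)) : R :=
  - (1/2) * (X^T *m invmx (Chat n t th1 th2 th3) *m X) 0 0
  - (1/2) * ln (\det (Chat n t th1 th2 th3))
  - ((n * D)%:R / 2) * ln (2 * pi).

Definition dChat (n : nat) {D : nat} (t : 'I_D -> R) (th1 th2 th3 : R)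
  : 'M[R]_(n * D) :=
  \matrix_(i, j) derive1 (fun u => Chat n t u th2 th3 i j) th1.

End GPDefs.

From mathcomp Require Import all_boot all_order all_algebra.
From mathcomp Require Import all_classical all_reals all_analysis.
From mathcomp Require Import mxtens perm ring.
Import Order.TTheory GRing.Theory Num.Theory numFieldNormedType.Exports.

Set Implicit Arguments.
Unset Strict Implicit.
Unset Printing Implicit Defensive.
Local Open Scope ring_scope.
Local Open Scope classical_set_scope.

(* Ĉ = σ² I + J_n ⊗ A lies in the commutative algebra spanned by I and the
   matrices J_n ⊗ M, in which (J_n ⊗ P)(J_n ⊗ Q) = n J_n ⊗ PQ.  There
   Ĉ⁻¹ = σ⁻² I − (σ² n)⁻¹ J_n ⊗ (I − Z), and since ∂Ĉ/∂θ₁ = J_n ⊗ (A ⊙ S), the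
   products Ĉ⁻¹ ∂Ĉ and Ĉ⁻¹ ∂Ĉ Ĉ⁻¹ collapse to σ⁻² J_n ⊗ Z (A ⊙ S) and
   σ⁻⁴ J_n ⊗ Z (A ⊙ S) Z.  The derivative is the general Gaussian
   log-likelihood gradient ½ Xᵀ Ĉ⁻¹ Ĉ' Ĉ⁻¹ X − ½ tr (Ĉ⁻¹ Ĉ'), which follows from
   Jacobi's formula for the derivative of the determinant and from
   differentiating Ĉ Ĉ⁻¹ = I.  This needs Ĉ invertible with positive
   determinant for every θ₁, which holds because the Gaussian kernel matrix A is
   positive semidefinite: expanding exp (c t_r t_s) as a power series writes its
   quadratic form as a limit of sums of squares. *)

Section PsdMatrices.
Variable R : realFieldType.

Definition psdmx {n} (K : 'M[R]_n) := forall v : 'rV[R]_n, 0 <= (v *m K *m v^T) 0 0.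

Lemma psdmx_mulmx_tr m n (P : 'M[R]_(m, n)) (K : 'M[R]_n) :
  psdmx K -> psdmx (P *m K *m P^T).
Proof. by move=> psdK v; rewrite !mulmxA -mulmxA -trmx_mul. Qed.

Lemma psdmx_mxsub m n (f : 'I_m -> 'I_n) (K : 'M[R]_n) :
  psdmx K -> psdmx (mxsub f f K).
Proof.
have -> : mxsub f f K = rowsub f 1%:M *m K *m (rowsub f 1%:M)^T.
  by rewrite trmx_mxsub trmx1 mul_rowsub_mx mul1mx -mxsub_mul mulmx1.
exact: psdmx_mulmx_tr.
Qed.

Lemma psdmxZ n a (K : 'M[R]_n) : 0 <= a -> psdmx K -> psdmx (a *: K).
Proof. by move=> a_ge0 psdK v; rewrite -scalemxAr -scalemxAl mxE mulr_ge0. Qed.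

Lemma mulmx_tr_gt0 n (v : 'rV[R]_n) : v != 0 -> 0 < (v *m v^T) 0 0.
Proof.
move=> v_neq0; have [i vi_neq0] : exists i, v 0 i != 0.
  apply/existsP; apply: contraR v_neq0 => /existsPn vi_eq0.
  by apply/eqP/rowP => j; rewrite mxE; exact/eqP/negPn.
rewrite mxE (bigD1 i) //= ltr_pwDl ?sumr_ge0 // => [|j _]; rewrite mxE -expr2.
  by rewrite lt0r sqrf_eq0 vi_neq0 sqr_ge0.
exact: sqr_ge0.
Qed.

Lemma psdmx_add_scalar_unit n s (K : 'M[R]_n) :
  0 < s -> psdmx K -> s%:M + K \in unitmx.
Proof.
move=> s_gt0 psdK; rewrite unitmxE unitfE; apply/negP => /det0P [v v_neq0 vM0].
have : (v *m (s%:M + K) *m v^T) 0 0 = 0 by rewrite vM0 mul0mx mxE.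
rewrite mulmxDr mul_mx_scalar mulmxDl -scalemxAl mxE [X in X + _]mxE.
by apply/eqP; rewrite gt_eqF // ltr_pwDl ?psdK // mulr_gt0 // mulmx_tr_gt0.
Qed.

End PsdMatrices.

Section TensorProducts.
Variable R : comPzRingType.
Implicit Types (m n p q : nat).
Local Notation J n := (@const_mx R n n 1).

Lemma tensmxDr m n p q (A : 'M[R]_(m, n)) (B C : 'M[R]_(p, q)) :
  A *t (B + C) = A *t B + A *t C.
Proof. by apply/matrixP => i j; rewrite !mxE mulrDr. Qed.

Lemma tensmxZl m n p q a (A : 'M[R]_(m, n)) (B : 'M[R]_(p, q)) :
  (a *: A) *t B = a *: (A *t B).
Proof. by apply/matrixP => i j; rewrite !mxE mulrA. Qed.

Lemma tensmxZr m n p q a (A : 'M[R]_(m, n)) (B : 'M[R]_(p, q)) :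
  A *t (a *: B) = a *: (A *t B).
Proof. by apply/matrixP => i j; rewrite !mxE mulrCA. Qed.

Lemma mxtrace_tens m n (A : 'M[R]_m) (B : 'M[R]_n) : \tr (A *t B) = \tr A * \tr B.
Proof. by rewrite /mxtrace mulr_sum; apply: eq_bigr => k _; rewrite mxE. Qed.

Lemma mxtrace_const_mx n (a : R) : \tr (const_mx a : 'M[R]_n) = a *+ n.
Proof.
by rewrite /mxtrace (eq_bigr (fun=> a)) ?sumr_const ?card_ord // => i; rewrite mxE.
Qed.

Lemma const_mx1_mul m n p :
  (const_mx 1 : 'M[R]_(m, n)) *m (const_mx 1 : 'M[R]_(n, p)) = n%:R *: const_mx 1.
Proof.
apply/matrixP => i j; rewrite !mxE mulr1.
by under eq_bigr do rewrite !mxE mulr1; rewrite sumr_const card_ord.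
Qed.

Lemma tens_const_mx1_mul n p (P Q : 'M[R]_p) :
  J n *t P *m (J n *t Q) = J n *t (n%:R *: (P *m Q)).
Proof. by rewrite tensmx_mul const_mx1_mul tensmxZl tensmxZr. Qed.

Lemma tens_const_mx1E n p (K : 'M[R]_p) :
  J n *t K =
  mxsub (fun k => (mxtens_unindex k).2) (fun k => (mxtens_unindex k).2) K.
Proof. by apply/matrixP => i j; rewrite !mxE mul1r. Qed.

End TensorProducts.

Section TensorInverse.
Variables (R : fieldType) (n D : nat) (s : R) (A Z : 'M[R]_D).
Hypotheses (s_neq0 : s != 0) (n_neq0 : n%:R != 0 :> R).
Hypothesis Zinv : Z *m (1%:M + (s^-1 * n%:R) *: A) = 1%:M.
Local Notation J := (@const_mx R n n 1).

Lemma mul_scalar_add_tens_const a b (P Q : 'M[R]_D) :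
  (a%:M + J *t P) *m (b%:M + J *t Q) =
  (a * b)%:M + J *t (a *: Q + b *: P + n%:R *: (P *m Q)).
Proof.
rewrite mulmxDl !mulmxDr -scalar_mxM mul_scalar_mx mul_mx_scalar.
by rewrite tens_const_mx1_mul -!tensmxZr -!addrA -!tensmxDr [a *: Q + _]addrA.
Qed.

Lemma invmx_scalar_add_tens_const :
  invmx (s%:M + J *t A) = s^-1%:M + J *t (- (s * n%:R)^-1 *: (1%:M - Z)).
Proof.
set G := s^-1%:M + _; have ZA : Z *m A = n%:R^-1 * s *: (1%:M - Z).
  rewrite -Zinv mulmxDr mulmx1 -scalemxAr addrC addKr scalerA.
  by rewrite -[LHS]scale1r; congr (_ *: _); field; rewrite s_neq0 n_neq0.
have GC : G *m (s%:M + J *t A) = 1%:M.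
  rewrite mul_scalar_add_tens_const mulVf // -[RHS]addr0 -(tensmx0 J).
  congr (_ + _ *t _); rewrite -scalemxAl mulmxBl mul1mx ZA.
  by apply/matrixP => i j; rewrite !mxE; field; rewrite s_neq0 n_neq0.
have [_ Cunit] := mulmx1_unit GC.
by rewrite -[invmx _]mul1mx -GC -mulmxA mulmxV // mulmx1.
Qed.

Lemma mul_invmx_tens_const (H : 'M[R]_D) :
  invmx (s%:M + J *t A) *m (J *t H) = J *t (s^-1 *: (Z *m H)).
Proof.
rewrite invmx_scalar_add_tens_const mulmxDl mul_scalar_mx tens_const_mx1_mul.
rewrite -tensmxZr -tensmxDr; congr (_ *t _); rewrite -scalemxAl mulmxBl mul1mx.
by apply/matrixP => i j; rewrite !mxE; field; rewrite s_neq0 n_neq0.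
Qed.

Lemma mul_invmx_tens_const_invmx (H : 'M[R]_D) :
  invmx (s%:M + J *t A) *m (J *t H) *m invmx (s%:M + J *t A) =
  (s ^+ 2)^-1 *: (J *t (Z *m H *m Z)).
Proof.
rewrite mul_invmx_tens_const invmx_scalar_add_tens_const mulmxDr mul_mx_scalar.
rewrite tens_const_mx1_mul -tensmxZr -tensmxDr -tensmxZr; congr (_ *t _).
rewrite -scalemxAr -scalemxAl mulmxBr mulmx1.
by apply/matrixP => i j; rewrite !mxE; field; rewrite s_neq0 n_neq0.
Qed.

End TensorInverse.

Section MatrixCalculus.
Variable R : numFieldType.
Implicit Types (x : R).

Lemma is_derive_big_sum (I : Type) (r : seq I) (P : pred I)
    (f : I -> R -> R) (df : I -> R) x :
  (forall i, is_derive x 1 (f i) (df i)) ->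
  is_derive x 1 (fun u => \sum_(i <- r | P i) f i u) (\sum_(i <- r | P i) df i).
Proof.
move=> fdf; rewrite -fct_sumE.
by elim/big_ind2 : _ => // *; [exact: is_derive_cst | exact: is_deriveD].
Qed.

Lemma is_derive_big_prod (I : eqType) (r : seq I) (f : I -> R -> R) (df : I -> R) x :
  uniq r -> (forall i, is_derive x 1 (f i) (df i)) ->
  is_derive x 1 (fun u => \prod_(i <- r) f i u)
    (\sum_(i <- r) df i * \prod_(k <- r | i != k) f k x).
Proof.
move=> + fdf; elim: r => [_|a r IHr /= /andP[a_notin_r r_uniq]].
  under eq_fun do rewrite big_nil.
  by rewrite big_nil; exact: is_derive_cst.
under eq_fun do rewrite big_cons.
apply: is_derive_eq; first exact: is_deriveM (fdf a) (IHr r_uniq).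
rewrite -[LHS]/(f a x * (\sum_(i <- r) df i * \prod_(k <- r | i != k) f k x)
                + (\prod_(i <- r) f i x) * df a).
rewrite big_cons [in RHS]big_cons eqxx /= addrC; congr (_ + _).
  rewrite mulrC big_seq_cond [in RHS]big_seq_cond; congr (_ * _).
  apply: eq_bigl => k; case: (boolP (k \in r)) => //= kr.
  by apply/esym; apply: contraNneq a_notin_r => ->.
rewrite mulr_sumr !big_seq; apply: eq_bigr => i ir.
rewrite big_cons ifT; first exact: mulrCA.
by apply: contraNneq a_notin_r => <-.
Qed.

Definition is_derive_mx m n (F : R -> 'M[R]_(m, n)) x (dF : 'M[R]_(m, n)) :=
  forall i j, is_derive x 1 (fun u => F u i j) (dF i j).

Lemma is_derive_mx_cst m n (M : 'M[R]_(m, n)) x : is_derive_mx (fun=> M) x 0.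
Proof. by move=> i j; rewrite mxE; exact: is_derive_cst. Qed.

Lemma is_derive_mx_tensl m n p q (A : 'M[R]_(m, n))
    (F : R -> 'M[R]_(p, q)) dF x :
  is_derive_mx F x dF -> is_derive_mx (fun u => A *t F u) x (A *t dF).
Proof.
move=> FdF i j; case: (mxtens_indexP i) => a r; case: (mxtens_indexP j) => b s.
under eq_fun do rewrite tensmxE.
by rewrite tensmxE; exact: is_deriveZ.
Qed.

Lemma is_derive_mx_addl m n (M : 'M[R]_(m, n)) F dF x :
  is_derive_mx F x dF -> is_derive_mx (fun u => M + F u) x dF.
Proof.
move=> FdF i j; under eq_fun do rewrite mxE.
exact: is_derive_eq (is_deriveD (is_derive_cst _ x 1) (FdF i j)) (add0r _).
Qed.

Lemma is_derive_mx_mul m n p (F : R -> 'M[R]_(m, n)) (G : R -> 'M[R]_(n, p))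
    dF dG x :
  is_derive_mx F x dF -> is_derive_mx G x dG ->
  is_derive_mx (fun u => F u *m G u) x (dF *m G x + F x *m dG).
Proof.
move=> FdF GdG i j; under eq_fun do rewrite mxE.
rewrite !mxE -big_split; apply: is_derive_big_sum => k /=.
apply: is_derive_eq; first exact: (is_deriveM (FdF i k) (GdG k j)).
by rewrite addrC; congr (_ + _); exact: mulrC.
Qed.

Lemma is_derive_det n (F : R -> 'M[R]_n) dF x : is_derive_mx F x dF ->
  is_derive x 1 (fun u => \det (F u)) (\sum_i \sum_j dF i j * cofactor (F x) i j).
Proof.
move=> FdF; apply: is_derive_eq.
  apply: is_derive_big_sum => s; apply: is_deriveZ.
  by apply: is_derive_big_prod; [exact: index_enum_uniq | move=> i; exact: FdF].
under eq_bigr do rewrite /= scaler_sumr.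
rewrite exchange_big /=; apply: eq_bigr => i _.
rewrite (partition_big (fun s : 'S_n => s i) predT) //=; apply: eq_bigr => j _.
rewrite expand_cofactor big_distrr; apply: eq_big => // s /eqP <-.
exact: mulrCA.
Qed.

Lemma is_derive_mx_invmx n (F : R -> 'M[R]_n) dF x :
  (forall u, F u \in unitmx) -> is_derive_mx F x dF ->
  is_derive_mx (fun u => invmx (F u)) x (- (invmx (F x) *m dF *m invmx (F x))).
Proof.
move=> Funit FdF.
have invF_derivable i j : derivable (fun u => invmx (F u) i j) x 1.
  under eq_fun do rewrite /invmx Funit !mxE /cofactor.
  have minorF :
      is_derive_mx (fun u => row' j (col' i (F u))) x (row' j (col' i dF)).
    by move=> k l; under eq_fun do rewrite !mxE; rewrite !mxE; exact: FdF.
  apply: derivableM; first apply: derivableV.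
  - by rewrite -unitfE -unitmxE.
  - by case: (is_derive_det FdF).
  - by apply: derivableM; [exact: derivable_cst | case: (is_derive_det minorF)].
pose dinvF := \matrix_(i, j) 'D_1 (fun u => invmx (F u) i j) x.
have invFdinvF : is_derive_mx (fun u => invmx (F u)) x dinvF.
  by move=> i j; rewrite mxE; exact: derivableP.
have := is_derive_mx_mul FdF invFdinvF.
have -> : (fun u => F u *m invmx (F u)) = fun=> 1%:M.
  by apply/funext => u; rewrite mulmxV.
move=> dF1; have : dF *m invmx (F x) + F x *m dinvF = 0.
  apply/matrixP => i j; rewrite -(derive_val (is_derive := dF1 i j)).
  by rewrite (derive_val (is_derive := is_derive_mx_cst 1%:M x i j)) mxE.
move/eqP; rewrite addrC addr_eq0 => /eqP FdinvF.
suff -> : - (invmx (F x) *m dF *m invmx (F x)) = dinvF by [].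
by rewrite -mulmxA -mulmxN -FdinvF mulmxA mulVmx ?mul1mx.
Qed.

End MatrixCalculus.

Lemma mxtrace_invmx_mul (R : comUnitRingType) n (C dC : 'M[R]_n) :
  C \in unitmx ->
  (\det C)^-1 * (\sum_i \sum_j dC i j * cofactor C i j) = \tr (invmx C *m dC).
Proof.
move=> Cunit; rewrite /invmx Cunit -scalemxAl mxtraceZ; congr (_ * _).
rewrite /mxtrace exchange_big; apply: eq_bigr => j _; rewrite mxE.
by apply: eq_bigr => i _; rewrite !mxE mulrC.
Qed.

Lemma is_derive_gaussian_loglik (R : realType) n (C : R -> 'M[R]_n) dC x
    (X : 'cV[R]_n) k :
  (forall u, C u \in unitmx) -> 0 < \det (C x) -> is_derive_mx C x dC ->
  is_derive x 1
    (fun u => - (1/2) * (X^T *m invmx (C u) *m X) 0 0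
              - (1/2) * ln (\det (C u)) - k)
    ((1/2) * (X^T *m (invmx (C x) *m dC *m invmx (C x)) *m X) 0 0
     - (1/2) * \tr (invmx (C x) *m dC)).
Proof.
move=> Cunit detC_gt0 CdC.
have dquad : is_derive x 1 (fun u => (X^T *m invmx (C u) *m X) 0 0) _ :=
  is_derive_mx_mul (is_derive_mx_mul (is_derive_mx_cst X^T x)
    (is_derive_mx_invmx Cunit CdC)) (is_derive_mx_cst X x) 0 0.
have dlogdet : is_derive x 1 (fun u => ln (\det (C u))) _ :=
  is_derive1_comp (is_derive1_ln detC_gt0) (is_derive_det CdC).
refine (is_derive_eq (is_deriveB (is_deriveB (is_deriveZ (- (1/2)) dquad)
  (is_deriveZ (1/2) dlogdet)) (is_derive_cst k x 1)) _).
rewrite -mxtrace_invmx_mul // mul0mx add0r mulmx0 addr0 mulmxN mulNmx mxE.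
by rewrite subr0 scaleNr scalerN opprK.
Qed.

Lemma psdmx_add_scalar_det_gt0 (R : realType) n s (K : 'M[R]_n) :
  0 < s -> psdmx K -> 0 < \det (s%:M + K).
Proof.
move=> s_gt0 psdK; pose f y := \det (s%:M + y *: K).
have f_neq0 y : 0 <= y -> f y != 0.
  move=> y_ge0; rewrite /f -unitfE -unitmxE.
  by apply: psdmx_add_scalar_unit => //; exact: psdmxZ.
have f_derivable y : derivable f y 1.
  have : is_derive_mx (fun u => s%:M + u *: K) y K.
    move=> i j; under eq_fun do rewrite !mxE.
    refine (is_derive_eq (is_deriveD (is_derive_cst _ y 1)
      (is_deriveM (is_derive_id y 1) (is_derive_cst (K i j) y 1))) _).
    by rewrite scaler0 !add0r; exact: mulr1.
  by case/is_derive_det.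
have f0_gt0 : 0 < f 0 by rewrite /f scale0r addr0 det_scalar exprn_gt0.
rewrite -[K]scale1r -/(f 1) ltNge; apply/negP => f1_le0.
have f_cont : {within `[0, 1], continuous f}.
  by apply: derivable_within_continuous => y _; exact: f_derivable.
have [|y] := @IVT R f 0 1 0 ler01 f_cont.
  by rewrite ge_min le_max f1_le0 (ltW f0_gt0) orbT.
by rewrite in_itv /= => /andP[y_ge0 _] /eqP; apply/negP/f_neq0.
Qed.

Lemma quad_formE (R : pzSemiRingType) n (v : 'rV[R]_n) (M : 'M[R]_n) :
  (v *m M *m v^T) 0 0 = \sum_i \sum_j v 0 i * M i j * v 0 j.
Proof.
rewrite mxE exchange_big; apply: eq_bigr => i _.
by rewrite !mxE big_distrl.
Qed.

Lemma cvg_big_sum (R : numFieldType) (I : Type) (r : seq I) (P : pred I)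
    (u : I -> R^nat) (l : I -> R) :
  (forall i, u i n @[n --> \oo] --> l i) ->
  \sum_(i <- r | P i) u i n @[n --> \oo] --> \sum_(i <- r | P i) l i.
Proof.
move=> ul; rewrite -fct_sumE.
by elim/big_ind2 : _ => // *; [exact: cvg_cst | exact: cvgD].
Qed.

Lemma psdmx_expR_mul (R : realType) n (t : 'I_n -> R) c :
  0 <= c -> psdmx (\matrix_(r, s) expR (c * (t r * t s))).
Proof.
move=> c_ge0 v; rewrite quad_formE.
pose partial N :=
  \sum_r \sum_s v 0 r * v 0 s * series (exp_coeff (c * (t r * t s))) N.
have partial_cvg : partial N @[N --> \oo] -->
    \sum_r \sum_s v 0 r * v 0 s * expR (c * (t r * t s)).
  apply: cvg_big_sum => r; apply: cvg_big_sum => s.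
  by apply: cvgMl_tmp; exact: is_cvg_series_exp_coeff.
have -> : \sum_r \sum_s v 0 r * (\matrix_(r, s) expR (c * (t r * t s))) r s * v 0 s
    = \sum_r \sum_s v 0 r * v 0 s * expR (c * (t r * t s)).
  by apply: eq_bigr => r _; apply: eq_bigr => s _; rewrite mxE mulrAC.
rewrite -(cvg_lim _ partial_cvg) //; apply: limr_ge (cvgP _ partial_cvg) _.
apply: nearW => N.
have -> : partial N = \sum_(0 <= k < N)
    c ^+ k / k`!%:R * ((\sum_r v 0 r * t r ^+ k) * (\sum_s v 0 s * t s ^+ k)).
  rewrite /partial /series /=; symmetry.
  under eq_bigr do rewrite mulr_suml mulr_sumr.
  rewrite exchange_big; apply: eq_bigr => r _.
  under eq_bigr do rewrite mulr_sumr mulr_sumr.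
  rewrite exchange_big; apply: eq_bigr => s _.
  rewrite mulr_sumr; apply: eq_bigr => k _.
  by rewrite /exp_coeff /= !exprMn; ring.
by apply: sumr_ge0 => k _; rewrite -expr2 mulr_ge0 ?sqr_ge0 // divr_ge0 ?exprn_ge0.
Qed.

Section GaussianProcessModel.
Variables (R : realType) (D : nat) (t : 'I_D -> R) (th2 : R).

Lemma Amx_psd u : psdmx (Amx t u th2).
Proof.
pose d := \row_r expR (- (t r ^+ 2 / len u)).
have -> : Amx t u th2 = asq th2 *:
    (diag_mx d *m \matrix_(r, s) expR (2 / len u * (t r * t s)) *m (diag_mx d)^T).
  apply/matrixP => r s; rewrite tr_diag_mx mul_diag_mx mul_mx_diag !mxE -!expRD.
  by congr expR; ring.
apply: psdmxZ; first exact: expR_ge0.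
apply/psdmx_mulmx_tr/psdmx_expR_mul.
by rewrite divr_ge0 // ltW // expR_gt0.
Qed.

Lemma is_derive_mx_Amx x :
  is_derive_mx (fun u => Amx t u th2) x (hadamard (Amx t x th2) (Smx t x)).
Proof.
move=> r s; under eq_fun do rewrite mxE /len.
rewrite !mxE /len; set d := (t r - t s) ^+ 2.
have dexpN : is_derive x 1 (fun u => - (d / expR u)) (d / expR x).
  refine (is_derive_eq (is_deriveN (is_deriveZ d
    (is_deriveV (lt0r_neq0 (expR_gt0 x)) (is_derive_expR x)))) _).
  rewrite scaleNr scalerN opprK -[_ *: _]/(d * (_ * _)).
  by field; rewrite lt0r_neq0 ?expR_gt0.
refine (is_derive_eq (is_deriveZ (asq th2)
  (is_derive1_comp (is_derive_expR _) dexpN)) _).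
exact: mulrA.
Qed.

Lemma tr_hadamard_Amx_Smx u :
  (hadamard (Amx t u th2) (Smx t u))^T = hadamard (Amx t u th2) (Smx t u).
Proof. by apply/matrixP => r s; rewrite !mxE -[t s - t r]opprB sqrrN. Qed.

Variables (n : nat) (th3 : R).

Lemma ChatE u : Chat n t u th2 th3 = (ssq th3)%:M + Jmx n *t Amx t u th2.
Proof. by rewrite /Chat scalemx1. Qed.

Lemma tens_Jmx_Amx_psd u : psdmx (Jmx n *t Amx t u th2).
Proof. by rewrite tens_const_mx1E; apply/psdmx_mxsub/Amx_psd. Qed.

Lemma Chat_unit u : Chat n t u th2 th3 \in unitmx.
Proof.
by rewrite ChatE; exact: psdmx_add_scalar_unit (expR_gt0 _) (tens_Jmx_Amx_psd u).
Qed.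

Lemma Chat_det_gt0 u : 0 < \det (Chat n t u th2 th3).
Proof.
by rewrite ChatE; exact: psdmx_add_scalar_det_gt0 (expR_gt0 _) (tens_Jmx_Amx_psd u).
Qed.

Lemma is_derive_mx_Chat x : is_derive_mx (fun u => Chat n t u th2 th3) x
  (Jmx n *t hadamard (Amx t x th2) (Smx t x)).
Proof. by apply/is_derive_mx_addl/is_derive_mx_tensl/is_derive_mx_Amx. Qed.

End GaussianProcessModel.

Lemma sum_hadamard (R : realType) n (X Y : 'M[R]_n) :
  \sum_i \sum_j hadamard X Y i j = \tr (X *m Y^T).
Proof.
by apply: eq_bigr => i _; rewrite mxE; apply: eq_bigr => j _; rewrite !mxE.
Qed.

Lemma mxtrace_mulmx_sym (R : realType) n (Z H : 'M[R]_n) : H^T = H ->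
  \tr (Z *m H) = \sum_i H i i - \sum_i \sum_j hadamard (1%:M - Z) H i j.
Proof.
move=> Hsym; rewrite sum_hadamard Hsym -[\sum_i H i i]/(\tr H).
have -> : \tr ((1%:M - Z) *m H) = \tr H - \tr (Z *m H).
  by rewrite mulmxBl mul1mx; exact: raddfB.
by rewrite opprB addrC subrK.
Qed.

Theorem proposition1 (R : realType) (D n : nat) (hD : (0 < D)%N) (hn : (0 < n)%N)
  (t : 'I_D -> R)
  (ht : exists (t0 h : R), forall r : 'I_D, t r = t0 + (nat_of_ord r)%:R * h)
  (th1 th2 th3 : R) (X : 'cV[R]_(n * D)) :
  let A := Amx t th1 th2 in
  let S := Smx t th1 in
  let C := Chat n t th1 th2 th3 in
  let Z := Zmx n t th1 th2 th3 in
  let s2 := ssq th3 in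
  let trterm := \tr (invmx C *m dChat n t th1 th2 th3) in
  is_derive th1 1 (fun u => logp n t u th2 th3 X)
    ((1/2) * (X^T *m ((s2 ^+ 2)^-1 *: kron (Jmx n) (Z *m hadamard A S *m Z)) *m X) 0 0
     - (1/2) * trterm)
  /\ trterm =
     s2^-1 * n%:R * (\sum_(i < D) hadamard A S i i)
     - s2^-1 * n%:R * (\sum_(i < D) \sum_(j < D) hadamard (1%:M - Z) (hadamard A S) i j).
Proof.
move=> A S C Z s2 trterm.
have s2_neq0 : s2 != 0 by rewrite lt0r_neq0 ?expR_gt0.
have n_neq0 : n%:R != 0 :> R by rewrite pnatr_eq0 -lt0n.
have Zinv : Z *m (1%:M + (s2^-1 * n%:R) *: A) = 1%:M.
  rewrite mulVmx //.
  apply: psdmx_add_scalar_unit ltr01 (psdmxZ _ (Amx_psd _ _ _)).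
  by rewrite mulr_ge0 ?invr_ge0 ?expR_ge0.
have dC : dChat n t th1 th2 th3 = Jmx n *t hadamard A S.
  apply/matrixP => i j; rewrite mxE derive1E.
  exact: (derive_val (is_derive := is_derive_mx_Chat t th2 th3 th1 i j)).
have trE : trterm = \tr (Jmx n *t (s2^-1 *: (Z *m hadamard A S))).
  by rewrite /trterm dC /C ChatE (mul_invmx_tens_const s2_neq0 n_neq0 Zinv).
split.
  apply: is_derive_eq (is_derive_gaussian_loglik X ((n * D)%:R / 2 * ln (2 * pi))
    (Chat_unit t th2 n th3) (Chat_det_gt0 t th2 n th3 th1)
    (is_derive_mx_Chat t th2 th3 th1)) _.
  by rewrite /trterm dC /C ChatE (mul_invmx_tens_const_invmx s2_neq0 n_neq0 Zinv).
rewrite trE mxtrace_tens mxtraceZ mxtrace_const_mx.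
by rewrite (mxtrace_mulmx_sym _ (tr_hadamard_Amx_Smx t th2 th1)); ring.
Qed.
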